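(* Let $\mathcal{A}$ be a separating union-closed family with base set $[n]$, height $h$, and $h=|\mathcal{B}(\mathcal{A})|=4$. Then \[\mathrm{Avg}(\mathcal{A}) = \frac{\sum_{A\in\mathcal{A}}|A|}{|\mathcal{A}|} > \Big\lfloor \frac{n}{2} \Big\rfloor - 1.\]
   Context: A family of sets $\mathcal{A}$ is union-closed if it is a finite family of distinct finite sets with at least one nonempty member set, and $X,Y\in\mathcal{A}$ implies $X\cup Y\in\mathcal{A}$ (the empty set may be a member). For a family $\mathcal{F}$, $b(\mathcal{F})=\bigcup_{F\in\mathcal{F}}F$; the base set $b(\mathcal{A})$ is denoted $[n]=\{1,\dots,n\}$. $\mathcal{A}$ is separating if for any two distinct $x,y\in[n]$ there is $A\in\mathcal{A}$ containing exactly one of $x,y$. A chain in $\mathcal{A}$ is a subfamily any two distinct members of which are comparable under proper inclusion; the height $h$ of $\mathcal{A}$ is the maximum size of a chain in $\mathcal{A}$. For real $x\ge 0$, $\mathcal{A}_{<x}=\{A\in\mathcal{A} : |A|<x\}$. For $\mathcal{S}\subseteq\mathcal{A}$ and $S\in\mathcal{S}$, $\mathrm{irr}_{\mathcal{S}}(S)=\{s\in S : s\notin b(\mathcal{S}\setminus\{S\})\}$, and $\mathcal{S}$ is irredundant if $\mathrm{irr}_{\mathcal{S}}(S)\neq\emptyset$ for every $S\in\mathcal{S}$. Set $B=b(\mathcal{A}_{<n/2})$, and let $\mathcal{B}(\mathcal{A})$ denote any irredundant subfamily of $\mathcal{A}_{<n/2}$ of minimum size such that $b(\mathcal{B}(\mathcal{A}))=B$.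 *)

(* Families of subsets of [n] are modelled as
   {set {set 'I_n}} (element i : 'I_n stands for i+1). *)
From mathcomp Require Import all_boot all_order all_algebra.
Set Implicit Arguments. Unset Strict Implicit. Unset Printing Implicit Defensive.

Section Defs.
Variable T : finType.
Implicit Types (F S : {set {set T}}) (X Y : {set T}).

Definition bunion F : {set T} := \bigcup_(X in F) X.

Definition union_closed F : Prop :=
  (exists2 X, X \in F & X != set0) /\
  (forall X Y, X \in F -> Y \in F -> X :|: Y \in F).

Definition separating F : Prop :=
  forall x y : T, x \in bunion F -> y \in bunion F -> x != y ->
    exists2 X, X \in F & (x \in X) != (y \in X).

Definition is_chain (C : {set {set T}}) : bool :=
  [forall X in C, forall Y in C, (X != Y) ==> ((X \proper Y) || (Y \proper X))].

Definition height F : nat :=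
  \max_(C in powerset F | is_chain C) #|C|.

(* F_{<x} with x = k/2, i.e. members A with |A| < k/2 *)
Definition below_half F (k : nat) : {set {set T}} :=
  [set X in F | (2 * #|X| < k)%N].

Definition irr S X : {set T} := X :\: bunion (S :\ X).

Definition irredundant S : bool := [forall X in S, irr S X != set0].

(* S is a valid choice of B(F) (w.r.t. base-set size k): an irredundant
   subfamily of F_{<k/2} with b(S) = b(F_{<k/2}), of minimum size among
   all such subfamilies. *)
Definition is_B F (k : nat) S : Prop :=
  [/\ S \subset below_half F k, irredundant S,
      bunion S = bunion (below_half F k) &
      forall S', S' \subset below_half F k -> irredundant S' ->
        bunion S' = bunion (below_half F k) -> (#|S| <= #|S'|)%N].

End Defs.

Definition avg (T : finType) (F : {set {set T}}) : rat :=
  ((\sum_(X in F) #|X|)%:R / (#|F|)%:R)%R.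

(* Call a member of A small if it has fewer than n/2 elements. Height 4 means
   that a sequence X0, X1, X2, X3 of members, each having a point outside the
   union of its predecessors, has union [n] (otherwise its partial unions and
   [n] form a chain of length 5); with separation it also means that outside
   the top of such a sequence of length 3 there is at most one point.
   Since |B(A)| = 4, no three small members cover [n], so in a cover of [n] by
   four small members Z1, ..., Z4 each Zi has a private point, at most one point
   lies outside the union of any three of them, and double counting gives
   |Z1| + ... + |Z4| >= 2n - 4. The four members of B(A) form such a cover, and
   a small W can be exchanged into any such cover containing a given Z /= W.
   Hence |W| >= n/2 - 2 for all W in A, |W| >= n/2 - 1 for all W but at most one,
   and the full set [n] makes up for that single exception. *)
From mathcomp Require Import all_boot all_order all_algebra.
From mathcomp Require Import zify.
Import Order.TTheory GRing.Theory Num.Theory.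
Set Implicit Arguments. Unset Strict Implicit. Unset Printing Implicit Defensive.

Lemma leq_sum_but_one (I : finType) (P : pred I) (f g : I -> nat) :
  (forall i, P i -> g i <= (f i).+1) ->
  (forall i j, P i -> P j -> f i < g i -> f j < g j -> j = i) ->
  \sum_(i | P i) g i <= (\sum_(i | P i) f i).+1.
Proof.
move=> le_gf uniq_lt; have [i0 /andP [Pi0 lt_i0] | le_all] :=
  pickP [pred i | P i & f i < g i]; last first.
  apply: leqW; apply: leq_sum => i Pi; move: (le_all i) => /= /negbT.
  by rewrite Pi /= -leqNgt.
rewrite (bigD1 i0) // [in X in _ <= X](bigD1 i0) //= -addSn.
apply: leq_add; first exact: le_gf.
apply: leq_sum => i /andP [Pi ne_i]; rewrite leqNgt; apply: contra ne_i => lt_i.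
by rewrite (uniq_lt i0 i).
Qed.

Lemma set_enum4 (U : finType) (S : {set U}) : #|S| = 4 ->
  exists X1 X2 X3 X4, S = [set X1; X2; X3; X4] /\ uniq [:: X1; X2; X3; X4].
Proof.
rewrite cardE; have uniqS := enum_uniq (mem S).
case enumS: (enum S) uniqS => [|X1 [|X2 [|X3 [|X4 []]]]] // uniqS _.
exists X1, X2, X3, X4; split => //.
by apply/setP => X; rewrite -mem_enum enumS !inE !orbA.
Qed.

Section Families.
Variable T : finType.
Implicit Types (F G S : {set {set T}}) (X Y U : {set T}).

Lemma bunion_mem F G :
  {in F &, forall X Y, X :|: Y \in F} -> G \subset F -> G != set0 -> bunion G \in F.
Proof.
move=> unionF sGF /set0Pn [X0 X0G].
have X0F := subsetP sGF X0 X0G.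
rewrite /bunion (big_setD1 X0 X0G) /=.
elim/big_ind: _ => [|Y Z YF ZF|Y /setD1P [_ /(subsetP sGF) YF]].
- by rewrite setU0.
- by rewrite -(setUid X0) setUACA; apply: unionF.
- exact: unionF.
Qed.

Lemma irredundant_subfamily G :
  exists2 G' : {set {set T}}, G' \subset G & irredundant G' /\ bunion G' = bunion G.
Proof.
have [G' minG' sG'G] :=
  @minset_exists _ (fun G' => bunion G' == bunion G) G (eqxx _).
case/minsetP: minG' => /eqP bG' minG'.
exists G' => //; split => //.
apply/forallP => X; apply/implyP => XG'; apply/negP => /eqP irrX0.
have bX : bunion (G' :\ X) = bunion G'.
  rewrite [in RHS]/bunion (big_setD1 X XG') /=; apply/esym/setUidPr.
  by rewrite -setD_eq0; apply/eqP.
have := minG' (G' :\ X); rewrite bX bG' eqxx subsetDl => /(_ isT isT) /setP /(_ X).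
by rewrite !inE eqxx XG'.
Qed.

Lemma size_sorted_proper_le_height F (s : seq {set T}) :
  all (mem F) s -> sorted (fun X Y : {set T} => X \proper Y) s -> size s <= height F.
Proof.
move=> sF sorted_s.
have tr : transitive (fun X Y : {set T} => X \proper Y) by move=> ? ? ?; apply: proper_trans.
have uniq_s : uniq s by apply: sorted_uniq sorted_s => // X; rewrite properxx.
have <- : #|[set X in s]| = size s by rewrite cardsE; apply/card_uniqP.
apply: leq_bigmax_cond; rewrite powersetE; apply/andP; split.
  by apply/subsetP => X; rewrite inE => /(allP sF).
apply/forall_inP => X; rewrite inE => Xs; apply/forall_inP => Y; rewrite inE => Ys.
apply/implyP => neXY; have lt_s := sorted_ltn_index tr sorted_s.
case: (ltngtP (index X s) (index Y s)) => [/lt_s -> //|/lt_s -> //|].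
  by rewrite orbT.
by move/(congr1 (nth X s)); rewrite !nth_index // => /eqP; rewrite (negbTE neXY).
Qed.

Lemma irredundant_not_subset S X U :
  irredundant S -> X \in S -> U \subset bunion (S :\ X) -> ~~ (X \subset U).
Proof.
move=> /forall_inP irrS XS sU; apply: contra (irrS X XS) => sXU.
by rewrite setD_eq0 (subset_trans sXU).
Qed.

Lemma is_B_cover3_free F k S X Y Z :
  is_B F k S -> 3 < #|S| ->
  X \in below_half F k -> Y \in below_half F k -> Z \in below_half F k ->
  X :|: Y :|: Z != setT.
Proof.
case=> _ _ _ minS S4 Xs Ys Zs; apply/eqP => cover.
set G := [set X; Y; Z].
have sGH : G \subset below_half F k by rewrite !subUset !sub1set Xs Ys Zs.
have bG : bunion G = setT by rewrite /bunion !bigcup_setU !big_set1.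
have bH : bunion (below_half F k) = setT.
  apply/eqP; rewrite eqEsubset subsetT -bG /=.
  by apply/bigcupsP => W /(subsetP sGH) WH; apply: bigcup_sup.
have [G' sG'G [irrG' bG']] := irredundant_subfamily G.
have le_SG' : #|S| <= #|G'|.
  by apply: minS; rewrite ?(subset_trans sG'G sGH) // bG' bG bH.
have card_G : #|G| <= 3.
  apply: leq_trans (leq_card_setU _ _) _; rewrite cards1 addn1 ltnS.
  by apply: leq_trans (leq_card_setU _ _) _; rewrite !cards1.
by move: S4; rewrite ltnNge (leq_trans le_SG' (leq_trans (subset_leq_card sG'G) card_G)).
Qed.
End Families.

Section HeightFour.
Variables (T : finType) (F : {set {set T}}).
Implicit Types X Y Z W : {set T}.
Hypothesis unionF : {in F &, forall X Y, X :|: Y \in F}.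
Hypothesis setT_F : setT \in F.
Hypothesis heightF : height F <= 4.

Lemma union_chain4_cover X0 X1 X2 X3 :
  X0 \in F -> X1 \in F -> X2 \in F -> X3 \in F ->
  ~~ (X1 \subset X0) -> ~~ (X2 \subset X0 :|: X1) -> ~~ (X3 \subset X0 :|: X1 :|: X2) ->
  X0 :|: X1 :|: X2 :|: X3 = setT.
Proof.
move=> X0F X1F X2F X3F new1 new2 new3; apply/eqP; apply: contraT => notT.
have U1F := unionF X0F X1F; have U2F := unionF U1F X2F; have U3F := unionF U2F X3F.
have : size [:: X0; X0 :|: X1; X0 :|: X1 :|: X2; X0 :|: X1 :|: X2 :|: X3; setT] <= height F.
  apply: size_sorted_proper_le_height; first by rewrite /= X0F U1F U2F U3F setT_F.
  by rewrite /= !properUl // properT notT.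
by move/leq_trans/(_ heightF).
Qed.

Hypothesis sepF : separating F.

Lemma card_compl_le1 X0 X1 X2 :
  X0 \in F -> X1 \in F -> X2 \in F ->
  ~~ (X1 \subset X0) -> ~~ (X2 \subset X0 :|: X1) -> #|~: (X0 :|: X1 :|: X2)| <= 1.
Proof.
move=> X0F X1F X2F new1 new2; set V := X0 :|: X1 :|: X2.
apply/card_le1_eqP => x y; rewrite !in_setC => xV yV; apply/eqP; apply: contraT => xy.
have inF z : z \in bunion F by apply/bigcupP; exists setT.
have [Y YF sepY] := sepF (inF y) (inF x) xy.
have newY : ~~ (Y \subset V).
  apply/subsetPn; case yY: (y \in Y); first by exists y.
  by exists x => //; move: sepY; rewrite yY; case: (x \in Y).
have coverY := union_chain4_cover X0F X1F X2F YF new1 new2 newY.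
have inY z : z \notin V -> z \in Y.
  by move=> zV; move: (in_setT z); rewrite -coverY inE (negbTE zV).
by move: sepY; rewrite !inY.
Qed.

Local Notation small := (below_half F #|T|).

Definition quad_cover Z1 Z2 Z3 Z4 :=
  [/\ Z1 \in small, Z2 \in small, Z3 \in small, Z4 \in small &
      Z1 :|: Z2 :|: Z3 :|: Z4 = setT].

Lemma small_mem X : X \in small -> X \in F.
Proof. by rewrite inE => /andP []. Qed.

Lemma small_card X : X \in small -> 2 * #|X| < #|T|.
Proof. by rewrite inE => /andP []. Qed.

Lemma irredundant4_quad_cover (S : {set {set T}}) :
  S \subset small -> irredundant S -> #|S| = 4 -> exists Z1 Z2 Z3 Z4, quad_cover Z1 Z2 Z3 Z4.
Proof.
move=> sSH irrS /set_enum4 [X1 [X2 [X3 [X4 [defS]]]]].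
rewrite /= !inE !negb_or => /and4P [/and3P [n12 n13 n14] /andP [n23 n24] n34 _].
have inS : [/\ X1 \in S, X2 \in S, X3 \in S & X4 \in S] by rewrite defS !inE !eqxx !orbT.
have [X1S X2S X3S X4S] := inS; have XH := subsetP sSH.
have sub X Y : X \in S -> X != Y -> X \subset bunion (S :\ Y).
  by move=> XS XY; apply: bigcup_sup; rewrite in_setD1 XY.
exists X1, X2, X3, X4; split; rewrite ?XH //.
apply: union_chain4_cover; rewrite ?small_mem ?XH //;
  by apply: (irredundant_not_subset irrS) => //; rewrite ?subUset !sub.
Qed.

Lemma quad_cover_rot Z1 Z2 Z3 Z4 : quad_cover Z1 Z2 Z3 Z4 -> quad_cover Z2 Z3 Z4 Z1.
Proof. by case=> ? ? ? ? cover; split; rewrite // -cover setUC !setUA. Qed.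

Lemma quad_cover_rot3 Z1 Z2 Z3 Z4 : quad_cover Z1 Z2 Z3 Z4 -> quad_cover Z1 Z3 Z4 Z2.
Proof. by case=> ? ? ? ? cover; split; rewrite // -cover setUAC (setUAC Z1). Qed.

Hypothesis cover3_free : forall X Y Z,
  X \in small -> Y \in small -> Z \in small -> X :|: Y :|: Z != setT.

Lemma quad_cover_private Z1 Z2 Z3 Z4 :
  quad_cover Z1 Z2 Z3 Z4 -> ~~ (Z4 \subset Z1 :|: Z2 :|: Z3).
Proof.
case=> Z1s Z2s Z3s _ cover; apply: contra (cover3_free Z1s Z2s Z3s).
by move/setUidPl <-; rewrite cover.
Qed.

Lemma quad_cover_compl Z1 Z2 Z3 Z4 :
  quad_cover Z1 Z2 Z3 Z4 -> #|~: (Z2 :|: Z3 :|: Z4)| <= 1.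
Proof.
move=> cover; have [_ /small_mem Z2F /small_mem Z3F /small_mem Z4F _] := cover.
apply: card_compl_le1 => //.
  apply: contra (quad_cover_private (quad_cover_rot3 (quad_cover_rot3 cover))).
  by move/subset_trans; apply; rewrite subsetUr.
apply: contra (quad_cover_private cover).
by move/subset_trans; apply; rewrite -setUA subsetUr.
Qed.

Lemma quad_cover_card Z1 Z2 Z3 Z4 :
  quad_cover Z1 Z2 Z3 Z4 -> 2 * #|T| <= #|Z1| + #|Z2| + #|Z3| + #|Z4| + 4.
Proof.
move=> cover; have cover2 := quad_cover_rot cover.
have cover3 := quad_cover_rot cover2; have cover4 := quad_cover_rot cover3.
have e1 := quad_cover_compl cover; have e2 := quad_cover_compl cover2.
have e3 := quad_cover_compl cover3; have e4 := quad_cover_compl cover4.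
have card_sum_mem (A : {set T}) : #|A| = \sum_x (x \in A).
  by rewrite -sum1_card big_mkcond.
(* a point lying in a single [Zi] is outside the union of the other three *)
have count x : 2 <= (x \in Z1) + (x \in Z2) + (x \in Z3) + (x \in Z4) +
    ((x \in ~: (Z2 :|: Z3 :|: Z4)) + (x \in ~: (Z3 :|: Z4 :|: Z1)) +
     (x \in ~: (Z4 :|: Z1 :|: Z2)) + (x \in ~: (Z1 :|: Z2 :|: Z3))).
  have [_ _ _ _ covT] := cover; move: (in_setT x); rewrite -covT !inE.
  by case: (x \in Z1); case: (x \in Z2); case: (x \in Z3); case: (x \in Z4).
have := @leq_sum T (index_enum T) xpredT _ _ (fun x _ => count x).
rewrite sum_nat_const cardT -cardE mulnC !big_split /= -!card_sum_mem.
by lia.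
Qed.

Lemma quad_cover_replace Z1 Z2 Z3 Z4 W q :
  quad_cover Z1 Z2 Z3 Z4 -> W \in small -> q \in W -> q \notin Z1 :|: Z2 :|: Z3 ->
  quad_cover W Z1 Z2 Z3.
Proof.
move=> cover Ws qW qU; have [Z1s Z2s Z3s _ _] := cover.
have /card_le1_eqP compl1 :=
  quad_cover_compl (quad_cover_rot (quad_cover_rot (quad_cover_rot cover))).
split=> //; rewrite -(setUA W Z1) -(setUA W).
apply/setP => x; rewrite in_setU in_setT.
case/boolP: (x \in Z1 :|: Z2 :|: Z3) => xU; first by rewrite orbT.
by rewrite orbF (compl1 q x) ?in_setC.
Qed.

Lemma quad_cover_exchange Z1 Z2 Z3 Z4 W :
  quad_cover Z1 Z2 Z3 Z4 -> W \in small -> W != Z1 ->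
  [\/ quad_cover W Z1 Z2 Z3, quad_cover W Z1 Z3 Z4 | quad_cover W Z1 Z4 Z2].
Proof.
move=> cover Ws WZ1.
have cover' := quad_cover_rot3 cover; have cover'' := quad_cover_rot3 cover'.
have [q4 q4Z4 q4U] := subsetPn (quad_cover_private cover).
have [q2 q2Z2 q2U] := subsetPn (quad_cover_private cover').
have [q3 q3Z3 q3U] := subsetPn (quad_cover_private cover'').
case q4W: (q4 \in W); first exact: Or31 (quad_cover_replace cover Ws q4W q4U).
case q2W: (q2 \in W); first exact: Or32 (quad_cover_replace cover' Ws q2W q2U).
case q3W: (q3 \in W); first exact: Or33 (quad_cover_replace cover'' Ws q3W q3U).
exfalso; have [/small_mem Z1F /small_mem Z2F /small_mem Z3F _ _] := cover.
(* [W] misses the private points of [Z2], [Z3], [Z4]: a chain of length 5 *)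
suff no_chain X0 X1 : X0 \in F -> X1 \in F -> ~~ (X1 \subset X0) ->
    X0 :|: X1 = Z1 :|: W -> False.
  have WF := small_mem Ws.
  move: WZ1; rewrite eqEsubset negb_and => /orP [nWZ1|nZ1W].
    exact: (no_chain Z1 W).
  by apply: (no_chain W Z1) => //; rewrite setUC.
move=> X0F X1F new1 X01.
have new2 : ~~ (Z2 \subset X0 :|: X1).
  apply/subsetPn; exists q2; rewrite // X01 !inE q2W orbF.
  by apply: contra q2U; rewrite !inE => ->.
have new3 : ~~ (Z3 \subset X0 :|: X1 :|: Z2).
  apply/subsetPn; exists q3; rewrite // X01 !inE q3W orbF.
  by apply: contra q3U; rewrite !inE => /orP [] ->; rewrite ?orbT.
move: (in_setT q4); rewrite -(union_chain4_cover X0F X1F Z2F Z3F new1 new2 new3).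
by rewrite X01 !inE q4W orbF; apply/negP; rewrite -in_setU -in_setU.
Qed.

Hypothesis quad0 : exists Z1 Z2 Z3 Z4, quad_cover Z1 Z2 Z3 Z4.

Lemma quad_cover_through W : W \in small -> exists Z2 Z3 Z4, quad_cover W Z2 Z3 Z4.
Proof.
move=> Ws; have [Z1 [Z2 [Z3 [Z4 cover]]]] := quad0.
have [-> | WZ1] := eqVneq W Z1; first by exists Z2, Z3, Z4.
by case: (quad_cover_exchange cover Ws WZ1) => ?; do 3 eexists; eassumption.
Qed.

Lemma quad_cover_through2 W W' :
  W \in small -> W' \in small -> W' != W -> exists Z3 Z4, quad_cover W' W Z3 Z4.
Proof.
move=> Ws W's W'W; have [Z2 [Z3 [Z4 cover]]] := quad_cover_through Ws.
by case: (quad_cover_exchange cover W's W'W) => ?; do 2 eexists; eassumption.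
Qed.

Lemma half_le_card_add2 W : W \in F -> #|T|./2 <= #|W| + 2.
Proof.
move=> WF; have := odd_double_half #|T|; rewrite -muln2 => ?.
case/boolP: (W \in small) => [Ws|]; last by rewrite inE WF andTb -leqNgt; lia.
have [Z2 [Z3 [Z4 cover]]] := quad_cover_through Ws.
have := quad_cover_card cover; have [_ /small_card ? /small_card ? /small_card ? _] := cover.
by lia.
Qed.

Lemma lt_half_uniq W W' : W \in F -> W' \in F ->
  #|W|.+1 < #|T|./2 -> #|W'|.+1 < #|T|./2 -> W' = W.
Proof.
move=> WF W'F lt_W lt_W'; have := odd_double_half #|T|; rewrite -muln2 => ?.
have small_of X : X \in F -> #|X|.+1 < #|T|./2 -> X \in small.
  by move=> XF ?; rewrite inE XF andTb; lia.
apply/eqP; apply: contraT => W'W.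
have [Z3 [Z4 cover]] :=
  quad_cover_through2 (small_of _ WF lt_W) (small_of _ W'F lt_W') W'W.
have := quad_cover_card cover; have [_ _ /small_card ? /small_card ? _] := cover.
by lia.
Qed.

Lemma half_mul_card_lt : #|T|./2 * #|F| < \sum_(W in F) #|W| + #|F|.
Proof.
have [Z1 [_ [_ [_ [/small_card lt_Z1 _ _ _ _]]]]] := quad0.
have lt_half : #|T|./2 < #|T|.
  by rewrite -divn2 ltn_Pdiv // (leq_ltn_trans _ lt_Z1).
rewrite mulnC -sum_nat_const -sum1_card -big_split /=.
rewrite (bigD1 setT) //= [X in _ < X](bigD1 setT) //= cardsT.
have le_sum : \sum_(W in F | W != setT) #|T|./2 <=
               (\sum_(W in F | W != setT) (#|W| + 1)).+1.
  apply: leq_sum_but_one => [W /andP [WF _] | W W' /andP [WF _] /andP [W'F _]].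
    by rewrite -addnS; apply: half_le_card_add2.
  by rewrite !addn1; apply: lt_half_uniq.
by move: (leq_add lt_half le_sum); rewrite addSn addnS addn1 addSn.
Qed.
End HeightFour.

Unset Implicit Arguments.

Theorem theorem4p1 (n : nat) (A : {set {set 'I_n}}) :
  union_closed A ->
  bunion A = [set: 'I_n] ->
  separating A ->
  height A = 4 ->
  (exists2 S, is_B A n S & #|S| = 4) ->
  (avg A > (n./2)%:R - 1)%R.
Proof.
move=> [[X0 X0A _] unionA] bA sepA hA [S BS S4].
have setT_A : setT \in A by rewrite -bA; apply: bunion_mem => //; apply/set0Pn; exists X0.
have height_A : height A <= 4 by rewrite hA.
have BS' : is_B A #|'I_n| S by rewrite card_ord.
have [sSH irrS _ _] := BS'.
have S_gt3 : 3 < #|S| by rewrite S4.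
have cover3 := is_B_cover3_free BS' S_gt3.
have quad := irredundant4_quad_cover unionA setT_A height_A sSH irrS S4.
have key := half_mul_card_lt unionA setT_A height_A sepA cover3 quad.
have A_gt0 : 0 < #|A| by apply/card_gt0P; exists X0.
rewrite /avg ltr_pdivlMr ?ltr0n // mulrBl mul1r ltrBlDr -natrM -natrD ltr_nat.
by rewrite card_ord in key.
Qed.
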